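(* Let $\rho$ be a two-qubit state whose reduced state on qubit $A$ is maximally mixed, i.e. $\vec{x}=0$ where $x_i=\mathrm{Tr}[\rho(\sigma_i\otimes\mathbb{1})]$. Let $y_j=\mathrm{Tr}[\rho(\mathbb{1}\otimes\sigma_j)]$, $T_{ij}=\mathrm{Tr}[\rho(\sigma_i\otimes\sigma_j)]$ and $Y=\vec{y}^{\,T}\vec{y}$ (the $3\times 3$ matrix with entries $y_iy_j$). Then $$G(\rho)=\tfrac14\big[|\vec{y}|^2+\|T\|^2-\kappa\big],$$ where $\|T\|^2=\sum_{i,j}T_{ij}^2$ and $\kappa$ is the largest eigenvalue of $T^TT+Y$.
   Context: $\sigma_i$ are the Pauli matrices. The Hilbert–Schmidt distance is $D(M,N)=\sqrt{\mathrm{Tr}[(M-N)(M-N)^\dagger]}$. For unit vectors $\vec{k},\vec{\ell}\in\mathbb{R}^3$ let $\Pi^A_\pm=\frac12(\mathbb{1}\pm\vec{k}\cdot\vec{\sigma})$, $\Pi^B_\pm=\frac12(\mathbb{1}\pm\vec{\ell}\cdot\vec{\sigma})$, and $\chi_{\vec{k},\vec{\ell}}=\sum_{i,j=\pm}(\Pi^A_i\otimes\Pi^B_j)\rho(\Pi^A_i\otimes\Pi^B_j)$. The symmetric geometric measure is $G(\rho)=\min_{\vec{k},\vec{\ell}}D^2(\rho,\chi_{\vec{k},\vec{\ell}})$ over unit vectors. *)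

From HB Require Import structures.
From mathcomp Require Import all_boot all_order all_algebra.
From mathcomp Require Import complex mxtens.
Set Implicit Arguments. Unset Strict Implicit. Unset Printing Implicit Defensive.
Import Order.TTheory GRing.Theory Num.Theory.
Local Open Scope ring_scope.

Section QubitDefs.
Variable R : rcfType.
Local Notation C := (R[i]).

Definition adjmx m n (A : 'M[C]_(m, n)) : 'M[C]_(n, m) := (map_mx (@conjc R) A)^T.

(* Pauli matrices sigma_1, sigma_2, sigma_3 (indices 0,1,2) *)
Definition pauli (k : 'I_3) : 'M[C]_2 :=
  \matrix_(a < 2, b < 2)
    (if k == 0 :> nat then (if a == b then 0 else 1)
     else if k == 1 :> nat then
       (if a == b then 0 else if a == 0 :> nat then - 'i%C else 'i%C)
     else (if a == b then (if a == 0 :> nat then 1 else -1) else 0)).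

Definition density_matrix (rho : 'M[C]_4) : Prop :=
  [/\ adjmx rho = rho,
      forall v : 'cV[C]_4, 0 <= (adjmx v *m rho *m v) 0 0
    & \tr rho = 1].

Definition xvec (rho : 'M[C]_4) : 'rV[R]_3 :=
  \row_i complex.Re (\tr (rho *m (pauli i *t (1%:M : 'M[C]_2)))).
Definition yvec (rho : 'M[C]_4) : 'rV[R]_3 :=
  \row_j complex.Re (\tr (rho *m ((1%:M : 'M[C]_2) *t pauli j))).
Definition Tmat (rho : 'M[C]_4) : 'M[R]_3 :=
  \matrix_(i, j) complex.Re (\tr (rho *m (pauli i *t pauli j))).

Definition unit_vec (k : 'rV[R]_3) : Prop := \sum_i k 0 i ^+ 2 = 1.

Definition projk (b : bool) (k : 'rV[R]_3) : 'M[C]_2 :=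
  (2%:R)^-1 *: (1%:M + (if b then 1 else -1) *: \sum_i (k 0 i)%:C%C *: pauli i).

Definition chi (rho : 'M[C]_4) (k l : 'rV[R]_3) : 'M[C]_4 :=
  \sum_(a : bool) \sum_(b : bool)
    ((projk a k *t projk b l) *m rho *m (projk a k *t projk b l)).

Definition HS2 (M N : 'M[C]_4) : C := \tr ((M - N) *m adjmx (M - N)).

(* g is the symmetric geometric measure G(rho): the minimum of
   D^2(rho, chi_{k,l}) over unit vectors k, l (attained and a lower bound) *)
Definition is_G (rho : 'M[C]_4) (g : R) : Prop :=
  (exists k l, [/\ unit_vec k, unit_vec l & HS2 rho (chi rho k l) = g%:C%C]) /\
  (forall k l, unit_vec k -> unit_vec l -> g%:C%C <= HS2 rho (chi rho k l)).

Definition largest_eigenvalue n (M : 'M[R]_n) (kappa : R) : Prop :=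
  eigenvalue M kappa /\ (forall lam, eigenvalue M lam -> lam <= kappa).

End QubitDefs.

(* Expand rho in the product Pauli basis s_m (x) s_n (m, n = 0..3, s_0 = 1): its
   coefficients c_mn = Tr[rho (s_m (x) s_n)] are real, with c_00 = 1, c_i0 = x_i, c_0j = y_j
   and c_ij = T_ij.  For a unit vector k the local dephasing M |-> sum_+- Pi_+- M Pi_+-
   sends s_m to sum_n A(k)_mn s_n with A(k) = e_0 e_0^T + (0,k)(0,k)^T, so chi_{k,l} has
   coefficients A(k)^T c A(l), and the orthogonality of the basis gives
     4 D^2(rho, chi_{k,l}) = |x|^2 - (k.x)^2 + |y|^2 - (l.y)^2 + ||T||^2 - (k^T T l)^2.
   For x = 0, Cauchy-Schwarz bounds (k^T T l)^2 by |T l|^2, with equality for k parallel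
   to T l, and |T l|^2 + (l.y)^2 = l^T (T^T T + Y) l is maximised over unit vectors l, with
   value kappa, at a top eigenvector of the symmetric matrix T^T T + Y. *)

From HB Require Import structures.
From mathcomp Require Import all_boot all_order all_algebra.
From mathcomp Require Import complex mxtens ring lra sesquilinear spectral.
Set Implicit Arguments. Unset Strict Implicit. Unset Printing Implicit Defensive.
Import Order.TTheory GRing.Theory Num.Theory.
Local Open Scope ring_scope.

Ltac case_ord2 a := case: a => [[|[|//]] ?].
Ltac case_ord3 a := case: a => [[|[|[|//]]] ?].
Ltac case_ord4 a := case: a => [[|[|[|[|//]]]] ?].

Lemma sum_mxtens_index (V : nmodType) m n (F : 'I_(m * n) -> V) :
  \sum_k F k = \sum_a \sum_b F (mxtens_index (a, b)).
Proof.
rewrite (pair_bigA _ (fun a b => F (mxtens_index (a, b)))) /=.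
rewrite [RHS](eq_bigr (fun p => F (mxtens_index p))); last by case.
apply: reindex.
by exists (@mxtens_unindex m n) => ? _; rewrite (mxtens_indexK, mxtens_unindexK).
Qed.

Lemma sum_mul_eq (R : pzSemiRingType) p (F : 'I_p -> R) i :
  \sum_j F j * (i == j)%:R = F i.
Proof.
rewrite (bigD1 i) //= eqxx mulr1 big1 ?addr0 // => j /negbTE.
by rewrite eq_sym => ->; rewrite mulr0.
Qed.

Lemma mxtrace_sum (R : pzSemiRingType) n I (r : seq I) (F : I -> 'M[R]_n) :
  \tr (\sum_(i <- r) F i) = \sum_(i <- r) \tr (F i).
Proof. exact: raddf_sum. Qed.

Lemma sum_sqr_sub_proj (R : comPzRingType) (I : finType) (u k : I -> R) :
  \sum_i k i ^+ 2 = 1 ->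
  \sum_i (u i - k i * \sum_a k a * u a) ^+ 2 = \sum_i u i ^+ 2 - (\sum_a k a * u a) ^+ 2.
Proof.
move=> k_unit; set s := \sum_a k a * u a.
transitivity (\sum_i u i ^+ 2 - s * s *+ 2 + (\sum_i k i ^+ 2) * s ^+ 2); last first.
  by rewrite k_unit; ring.
rewrite {2}/s !mulr_suml -sumrMnl -sumrB -big_split /=.
by apply: eq_bigr => i _; ring.
Qed.

Lemma mulmx_trmx_entry (R : pzSemiRingType) m n p q (A : 'M[R]_(m, n)) (c : 'M[R]_(m, p))
    (B : 'M[R]_(p, q)) i j :
  (A^T *m c *m B) i j = \sum_a \sum_b A a i * c a b * B b j.
Proof.
rewrite mxE exchange_big; apply: eq_bigr => b _; rewrite mxE mulr_suml.
by apply: eq_bigr => a _; rewrite mxE.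
Qed.

Section TensorProduct.
Variable R : comPzRingType.

Lemma mxtrace_tens m n (A : 'M[R]_m) (B : 'M[R]_n) : \tr (A *t B) = \tr A * \tr B.
Proof.
rewrite /mxtrace sum_mxtens_index mulr_suml; apply: eq_bigr => a _.
by rewrite mulr_sumr; apply: eq_bigr => b _; rewrite tensmxE.
Qed.

Lemma tensmx_suml m n p q I (r : seq I) (F : I -> 'M[R]_(m, n)) (B : 'M[R]_(p, q)) :
  (\sum_(i <- r) F i) *t B = \sum_(i <- r) (F i *t B).
Proof.
apply/matrixP => i j; rewrite !mxE !summxE mulr_suml.
by apply: eq_bigr => x _; rewrite !mxE.
Qed.

Lemma tensmx_sumr m n p q I (r : seq I) (A : 'M[R]_(m, n)) (F : I -> 'M[R]_(p, q)) :
  A *t (\sum_(i <- r) F i) = \sum_(i <- r) (A *t F i).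
Proof.
apply/matrixP => i j; rewrite !mxE !summxE mulr_sumr.
by apply: eq_bigr => x _; rewrite !mxE.
Qed.

Lemma tensmxZl m n p q a (A : 'M[R]_(m, n)) (B : 'M[R]_(p, q)) :
  (a *: A) *t B = a *: (A *t B).
Proof. by apply/matrixP => i j; rewrite !mxE mulrA. Qed.

Lemma tensmxZr m n p q a (A : 'M[R]_(m, n)) (B : 'M[R]_(p, q)) :
  A *t (a *: B) = a *: (A *t B).
Proof. by apply/matrixP => i j; rewrite !mxE mulrCA. Qed.

End TensorProduct.

Section Matrix2.
Variable R : pzRingType.

Definition mx2 (a b c d : R) : 'M[R]_2 :=
  \matrix_(i < 2, j < 2) if i == 0 :> nat then (if j == 0 :> nat then a else b)
                         else (if j == 0 :> nat then c else d).

Lemma mul_mx2 a b c d a' b' c' d' :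
  mx2 a b c d *m mx2 a' b' c' d' =
  mx2 (a * a' + b * c') (a * b' + b * d') (c * a' + d * c') (c * b' + d * d').
Proof.
apply/matrixP => i j; rewrite !mxE !big_ord_recl big_ord0 !mxE /=.
by case_ord2 i; case_ord2 j; rewrite /= addr0.
Qed.

Lemma add_mx2 a b c d a' b' c' d' :
  mx2 a b c d + mx2 a' b' c' d' = mx2 (a + a') (b + b') (c + c') (d + d').
Proof. by apply/matrixP => i j; rewrite !mxE; case_ord2 i; case_ord2 j. Qed.

Lemma scale_mx2 x a b c d : x *: mx2 a b c d = mx2 (x * a) (x * b) (x * c) (x * d).
Proof. by apply/matrixP => i j; rewrite !mxE; case_ord2 i; case_ord2 j. Qed.

Lemma mx2_1 : 1%:M = mx2 1 0 0 1.
Proof. by apply/matrixP => i j; rewrite !mxE; case_ord2 i; case_ord2 j. Qed.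

End Matrix2.

Section RowVectors.
Variable R : rcfType.

Definition sqnorm n (u : 'rV[R]_n) := \sum_i u 0 i ^+ 2.

Lemma sqnorm_ge0 n (u : 'rV[R]_n) : 0 <= sqnorm u.
Proof. by apply: sumr_ge0 => i _; exact: sqr_ge0. Qed.

Lemma sqnorm_gt0 n (u : 'rV[R]_n) : u != 0 -> 0 < sqnorm u.
Proof.
move=> u0; rewrite lt0r sqnorm_ge0 andbT; apply: contra u0 => /eqP u2_0.
apply/eqP/rowP => j; rewrite mxE; apply/eqP; rewrite -sqrf_eq0; apply/eqP.
by apply: (psumr_eq0P _ u2_0) => // i _; exact: sqr_ge0.
Qed.

Lemma sqnorm_normalize n (u : 'rV[R]_n) : u != 0 -> sqnorm ((Num.sqrt (sqnorm u))^-1 *: u) = 1.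
Proof.
move=> u0; have u2_gt0 := sqnorm_gt0 u0.
rewrite /sqnorm; under eq_bigr do rewrite mxE exprMn.
rewrite -mulr_sumr -/(sqnorm u) exprVn sqr_sqrtr ?mulVf ?gt_eqF //.
exact: ltW.
Qed.

Lemma quad_eigenvector n (M : 'M[R]_n) (u : 'rV[R]_n) lam :
  u *m M = lam *: u -> (u *m M *m u^T) 0 0 = lam * sqnorm u.
Proof.
move=> uM; rewrite uM -scalemxAl mxE; congr (_ * _); rewrite mxE /sqnorm.
by apply: eq_bigr => i _; rewrite mxE expr2.
Qed.

Lemma sqnorm3 (k : 'rV[R]_3) :
  sqnorm k = k 0 ord0 ^+ 2 + k 0 (lift ord0 ord0) ^+ 2 + k 0 (lift ord0 (lift ord0 ord0)) ^+ 2.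
Proof. by rewrite /sqnorm !big_ord_recl big_ord0 addr0 addrA. Qed.

Definition dotr n (u v : 'rV[R]_n) := \sum_i u 0 i * v 0 i.

Lemma dotrE n (u v : 'rV[R]_n) : dotr u v = (u *m v^T) 0 0.
Proof. by rewrite mxE; apply: eq_bigr => i _; rewrite mxE. Qed.

Lemma sqnorm_dotr n (u : 'rV[R]_n) : sqnorm u = dotr u u.
Proof. by apply: eq_bigr => i _; rewrite expr2. Qed.

Lemma quad_gram_outer n p (A : 'M[R]_(p, n)) (y l : 'rV[R]_n) :
  (l *m (A^T *m A + y^T *m y) *m l^T) 0 0 = sqnorm (l *m A^T) + dotr l y ^+ 2.
Proof.
have quad_gram q (B : 'M[R]_(q, n)) : (l *m (B^T *m B) *m l^T) 0 0 = sqnorm (l *m B^T).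
  by rewrite sqnorm_dotr dotrE trmx_mul trmxK !mulmxA.
rewrite mulmxDr mulmxDl mxE !quad_gram; congr (_ + _).
by rewrite /sqnorm big_ord1 dotrE.
Qed.

Lemma cauchy_schwarz3 (k v : 'rV[R]_3) : dotr k v ^+ 2 <= sqnorm k * sqnorm v.
Proof.
rewrite /dotr /sqnorm !big_ord_recl !big_ord0.
set a0 := k 0 _; set a1 := k 0 _; set a2 := k 0 _.
set b0 := v 0 _; set b1 := v 0 _; set b2 := v 0 _.
(* Lagrange's identity *)
have -> : (a0^+2 + (a1^+2 + (a2^+2 + 0))) * (b0^+2 + (b1^+2 + (b2^+2 + 0))) =
  (a0 * b0 + (a1 * b1 + (a2 * b2 + 0))) ^+ 2 +
  ((a0 * b1 - a1 * b0) ^+ 2 + (a0 * b2 - a2 * b0) ^+ 2 + (a1 * b2 - a2 * b1) ^+ 2).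
  by ring.
by rewrite lerDl !addr_ge0 ?sqr_ge0.
Qed.

Lemma exists_unit_dotr_sqr n (t : 'rV[R]_n.+1) :
  exists2 k : 'rV[R]_n.+1, sqnorm k = 1 & dotr k t ^+ 2 = sqnorm t.
Proof.
have [->|t0] := eqVneq t 0.
  exists (delta_mx 0 ord0); last first.
    by rewrite /dotr /sqnorm !big1 => [|i _|i _]; rewrite ?mxE ?mulr0 ?expr0n.
  by rewrite /sqnorm big_ord_recl big1 => [|i _]; rewrite !mxE ?expr1n ?addr0 // expr0n.
have t2_gt0 := sqnorm_gt0 t0.
exists ((Num.sqrt (sqnorm t))^-1 *: t); first exact: sqnorm_normalize.
have -> : dotr ((Num.sqrt (sqnorm t))^-1 *: t) t = (Num.sqrt (sqnorm t))^-1 * sqnorm t.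
  by rewrite sqnorm_dotr /dotr mulr_sumr; apply: eq_bigr => i _; rewrite mxE mulrA.
rewrite exprMn exprVn sqr_sqrtr ?ltW // expr2; field.
by rewrite gt_eqF.
Qed.

Lemma rayleigh_largest_eigenvalue n (M : 'M[R]_n) kappa (v : 'rV[R]_n) :
  v *m M = kappa *: v -> v != 0 ->
  (forall u : 'rV[R]_n, (u *m M *m u^T) 0 0 <= kappa * sqnorm u) ->
  largest_eigenvalue M kappa.
Proof.
move=> vM v0 rayleigh; split; first by apply/eigenvalueP; exists v.
move=> lam /eigenvalueP [u uM u0]; have := rayleigh u.
by rewrite (quad_eigenvector uM) ler_pM2r // sqnorm_gt0.
Qed.

End RowVectors.

Section Adjoint.
Variable R : rcfType.
Local Notation C := R[i].

Lemma adjmx_tens m n p q (A : 'M[C]_(m, n)) (B : 'M[C]_(p, q)) :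
  adjmx (A *t B) = adjmx A *t adjmx B.
Proof. by rewrite /adjmx map_mxT trmx_tens. Qed.

Lemma adjmx_sum m n I (r : seq I) (F : I -> 'M[C]_(m, n)) :
  adjmx (\sum_(i <- r) F i) = \sum_(i <- r) adjmx (F i).
Proof. by rewrite /adjmx raddf_sum linear_sum. Qed.

Lemma adjmxZ m n a (A : 'M[C]_(m, n)) : adjmx (a *: A) = conjc a *: adjmx A.
Proof. by rewrite /adjmx map_mxZ linearZ. Qed.

Lemma adjmxM m n p (A : 'M[C]_(m, n)) (B : 'M[C]_(n, p)) :
  adjmx (A *m B) = adjmx B *m adjmx A.
Proof. by rewrite /adjmx map_mxM trmx_mul. Qed.

Lemma mxtrace_adj n (A : 'M[C]_n) : \tr (adjmx A) = conjc (\tr A).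
Proof.
rewrite /adjmx mxtrace_tr /mxtrace rmorph_sum.
by apply: eq_bigr => i _; rewrite mxE.
Qed.

Lemma conjc_fixed_real (z : C) : conjc z = z -> (complex.Re z)%:C%C = z.
Proof. by move=> zJ; apply: RRe_real; rewrite CrealE; apply/eqP. Qed.

End Adjoint.

Section SymmetricEigen.
Variable R : rcfType.
Local Notation C := R[i].

Lemma ReMr (z : C) (x : R) : complex.Re (z * x%:C%C) = complex.Re z * x.
Proof. by case: z => a b /=; rewrite mulr0 subr0. Qed.

Lemma ImMr (z : C) (x : R) : complex.Im (z * x%:C%C) = complex.Im z * x.
Proof. by case: z => a b /=; rewrite mulr0 add0r. Qed.

Lemma ReMl (z : C) (x : R) : complex.Re (x%:C%C * z) = x * complex.Re z.
Proof. by case: z => a b /=; rewrite mul0r subr0. Qed.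

Lemma ImMl (z : C) (x : R) : complex.Im (x%:C%C * z) = x * complex.Im z.
Proof. by case: z => a b /=; rewrite mul0r addr0. Qed.

(* The real and imaginary parts of a complex eigenvector are real eigenvectors. *)
Lemma real_eigenvector n (M : 'M[R]_n) (w : 'rV[C]_n) (kappa : R) :
  w != 0 -> w *m map_mx (real_complex R) M = kappa%:C%C *: w ->
  exists2 v : 'rV[R]_n, v *m M = kappa *: v & v != 0.
Proof.
move=> w0 hw; pose w1 := map_mx (@complex.Re R) w; pose w2 := map_mx (@complex.Im R) w.
have hw1 : w1 *m M = kappa *: w1.
  apply/rowP => j; have := congr1 (fun A : 'rV[C]_n => complex.Re (A 0 j)) hw.
  rewrite !mxE /= raddf_sum ReMl => <-.
  by apply: eq_bigr => i _; rewrite /= !mxE ReMr.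
have hw2 : w2 *m M = kappa *: w2.
  apply/rowP => j; have := congr1 (fun A : 'rV[C]_n => complex.Im (A 0 j)) hw.
  rewrite !mxE /= raddf_sum ImMl => <-.
  by apply: eq_bigr => i _; rewrite /= !mxE ImMr.
have [w1_0|] := eqVneq w1 0; last by exists w1.
exists w2 => //; apply: contra w0 => /eqP w2_0; apply/eqP/rowP => j.
have /rowP/(_ j) := w1_0; have /rowP/(_ j) := w2_0; rewrite !mxE.
by case: (w 0 j) => a b /= -> ->.
Qed.

Local Open Scope sesquilinear_scope.

Lemma hermmx_quad_le n (A : 'M[C]_n) (kappa : C) : A \is hermsymmx ->
    (forall j, spectral_diag A 0 j <= kappa) ->
  forall z : 'rV[C]_n, (z *m A *m z^t*) 0 0 <= kappa * (z *m z^t*) 0 0.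
Proof.
move=> A_herm D_le z; have /orthomx_spectralP -> := hermitian_normalmx A_herm.
set P := spectralmx A; set D := spectral_diag A.
have P_unitary : P \is unitarymx := spectral_unitarymx A.
rewrite invmx_unitary //; pose zP := z *m P^t*.
have zPE : P *m z^t* = zP^t* by rewrite /zP trmx_mul map_mxM trmxCK.
have -> : z *m (P^t* *m diag_mx D *m P) *m z^t* = zP *m diag_mx D *m zP^t*.
  by rewrite -zPE /zP !mulmxA.
have -> : z *m z^t* = zP *m zP^t* by rewrite -zPE /zP mulmxA mulmxKtV.
rewrite !mxE mulr_sumr; apply: ler_sum => j _.
rewrite mul_mx_diag !mxE mulrAC mulrC.
by apply: ler_wpM2r; [exact: mulcJ_ge0 | exact: D_le].
Qed.

Lemma symmx_max_eigen n (M : 'M[R]_n.+1) : M^T = M -> exists kappa : R,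
  (exists2 v : 'rV[R]_n.+1, v *m M = kappa *: v & v != 0) /\
  (forall u : 'rV[R]_n.+1, (u *m M *m u^T) 0 0 <= kappa * sqnorm u).
Proof.
move=> M_sym; pose MC := map_mx (real_complex R) M.
have MC_herm : MC \is hermsymmx.
  rewrite is_hermitianmxE expr0 scale1r; apply/eqP/matrixP => i j.
  by rewrite !mxE -[in LHS]M_sym mxE; exact: (esym (conjc_real _)).
set D := spectral_diag MC; pose dR j := complex.Re (D 0 j).
have DE j : D 0 j = (dR j)%:C%C.
  by apply/esym/RRe_real; exact: (mxOverP (hermitian_spectral_diag_real MC_herm) 0 j).
pose j0 := Order.arg_max ord0 xpredT dR; exists (dR j0).
have dR_max j : dR j <= dR j0 by rewrite /j0; case: arg_maxP => // i _; apply.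
split.
  have /orthomx_spectralP MC_spectral := hermitian_normalmx MC_herm.
  set P := spectralmx MC in MC_spectral.
  have P_unitary : P \is unitarymx := spectral_unitarymx MC.
  pose w : 'rV[C]_n.+1 := delta_mx 0 j0 *m P.
  apply: (@real_eigenvector _ _ w).
    apply/eqP => /(congr1 (mulmx^~ (invmx P))).
    rewrite /w mulmxK ?unitarymx_unit // mul0mx.
    by move/matrixP/(_ 0 j0)/eqP; rewrite !mxE !eqxx /= oner_eq0.
  rewrite /w -/MC MC_spectral invmx_unitary // !mulmxA mulmxtVK // scalemxAl.
  congr (_ *m _); apply/matrixP => i j; rewrite mul_mx_diag !mxE ord1 eqxx /=.
  by case: (@eqP _ j j0) => [->|_]; rewrite ?mul0r ?mulr0 // mul1r mulr1 DE.
move=> u; pose uC := map_mx (real_complex R) u.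
have uC_adj : uC^t* = uC^T by apply/matrixP => i j; rewrite !mxE; exact: conjc_real.
rewrite -lecR.
have -> : ((u *m M *m u^T) 0 0)%:C%C = (uC *m MC *m uC^t*) 0 0.
  by rewrite uC_adj /uC /MC map_trmx -!map_mxM [RHS]mxE.
have -> : (dR j0 * sqnorm u)%:C%C = (dR j0)%:C%C * (uC *m uC^t*) 0 0.
  rewrite uC_adj rmorphM rmorph_sum mxE; congr (_ * _); apply: eq_bigr => i _.
  by rewrite !mxE expr2 rmorphM.
by apply: hermmx_quad_le => // j; rewrite DE lecR.
Qed.

End SymmetricEigen.

Section PauliBasis.
Variable R : rcfType.
Local Notation C := R[i].

Definition pauli4 (m : 'I_4) : 'M[C]_2 := \matrix_(a < 2, b < 2)
 (if m == 0 :> nat then (if a == b then 1 else 0)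
  else if m == 1 :> nat then (if a == b then 0 else 1)
  else if m == 2 :> nat then (if a == b then 0 else if a == 0 :> nat then - 'i%C else 'i%C)
  else (if a == b then (if a == 0 :> nat then 1 else -1) else 0)).

Lemma pauli4_0 : pauli4 ord0 = 1%:M.
Proof. by apply/matrixP => a b; rewrite !mxE /=; case: (a == b). Qed.

Lemma pauli4_lift i : pauli4 (lift ord0 i) = pauli R i.
Proof. by apply/matrixP => a b; rewrite !mxE lift0 /=. Qed.

Lemma pauli4_mx2 m : pauli4 m =
  if m == 0 :> nat then mx2 1 0 0 1 else if m == 1 :> nat then mx2 0 1 1 0
  else if m == 2 :> nat then mx2 0 (- 'i%C) 'i%C 0 else mx2 1 0 0 (-1).
Proof. by apply/matrixP => a b; case_ord4 m; case_ord2 a; case_ord2 b; rewrite !mxE. Qed.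

Lemma adjmx_pauli4 m : adjmx (pauli4 m) = pauli4 m.
Proof.
apply/matrixP => a b; rewrite !mxE.
by case_ord4 m; case_ord2 a; case_ord2 b; rewrite /= ?conjc0 ?conjc1 //; simpc.
Qed.

Lemma mxtrace_pauli4M m n : \tr (pauli4 m *m pauli4 n) = (2 * (m == n))%:R.
Proof.
rewrite !pauli4_mx2; case_ord4 m; case_ord4 n; rewrite /= mul_mx2 /mxtrace.
all: rewrite !big_ord_recl big_ord0 !mxE /=.
all: by ring: (@sqr_i R).
Qed.

Lemma pauli4_complete q p a b :
  \sum_m pauli4 m q p * pauli4 m a b = (2 * ((p == a) && (q == b)))%:R.
Proof.
rewrite !big_ord_recl big_ord0 !mxE /=.
by case_ord2 q; case_ord2 p; case_ord2 a; case_ord2 b; rewrite /=; ring: (@sqr_i R).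
Qed.

End PauliBasis.

Section Dephasing.
Variable R : rcfType.
Local Notation C := R[i].

Definition dephase (k : 'rV[R]_3) (M : 'M[C]_2) := \sum_(a : bool) projk a k *m M *m projk a k.

(* Matching on the value of [m] lets [bloch4] compute on literal ordinals. *)
Definition bloch4 (k : 'rV[R]_3) (m : 'I_4) : R :=
  match nat_of_ord m with
  | 1 => k 0 ord0 | 2 => k 0 (lift ord0 ord0) | 3 => k 0 (lift ord0 (lift ord0 ord0))
  | _ => 0 end.

Lemma bloch4_0 k : bloch4 k ord0 = 0.
Proof. by []. Qed.

Lemma bloch4_lift k i : bloch4 k (lift ord0 i) = k 0 i.
Proof. by case_ord3 i; rewrite /bloch4 /=; congr (k 0 _); apply: val_inj. Qed.

Definition dephase_mx (k : 'rV[R]_3) : 'M[R]_4 := \matrix_(m, n)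
  (bloch4 k m * bloch4 k n + (m == n)%:R *
     (if m == 0 :> nat then (1 + sqnorm k) / 2 else (1 - sqnorm k) / 2)).

Lemma projk_mx2 b k : projk b k = (2%:R : C)^-1 *: (mx2 1 0 0 1 + (if b then 1 else -1) *:
  mx2 (k 0 (lift ord0 (lift ord0 ord0)))%:C%C
      ((k 0 ord0)%:C%C - 'i%C * (k 0 (lift ord0 ord0))%:C%C)
      ((k 0 ord0)%:C%C + 'i%C * (k 0 (lift ord0 ord0))%:C%C)
      (- (k 0 (lift ord0 (lift ord0 ord0)))%:C%C)).
Proof.
rewrite /projk mx2_1; congr (_ *: (_ + _ *: _)).
rewrite !big_ord_recl big_ord0 addr0 -!pauli4_lift !pauli4_mx2 /=.
by rewrite !scale_mx2 !add_mx2; congr mx2; ring.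
Qed.

Lemma dephase_pauli4 k m :
  dephase k (pauli4 R m) = \sum_n (dephase_mx k m n)%:C%C *: pauli4 R n.
Proof.
have inv2 : (2%:R : C)^-1 = ((2%:R : R)^-1)%:C%C by rewrite fmorphV rmorph_nat.
rewrite /dephase big_bool /= !projk_mx2 !scale_mx2 !add_mx2 !scale_mx2.
rewrite !big_ord_recl big_ord0 addr0 !pauli4_mx2 /= !scale_mx2 !add_mx2.
rewrite !mxE sqnorm3 /bloch4 /= inv2.
move: (k 0 ord0) (k 0 (lift ord0 ord0)) (k 0 (lift ord0 (lift ord0 ord0))) => k0 k1 k2.
case_ord4 m; rewrite /= !mul_mx2 !add_mx2; congr mx2.
all: by field: (@sqr_i R).
Qed.

Lemma dephase_mx00 (u : 'rV[R]_3) : unit_vec u -> dephase_mx u ord0 ord0 = 1.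
Proof. by move=> u_unit; rewrite mxE /= (u_unit : sqnorm u = 1) mul0r add0r mul1r; field. Qed.

Lemma dephase_mx0l (u : 'rV[R]_3) j : dephase_mx u ord0 (lift ord0 j) = 0.
Proof. by rewrite mxE bloch4_0 mul0r add0r (negbTE (neq_lift _ _)) mul0r. Qed.

Lemma dephase_mxl0 (u : 'rV[R]_3) i : dephase_mx u (lift ord0 i) ord0 = 0.
Proof. by rewrite mxE bloch4_0 mulr0 add0r eq_sym (negbTE (neq_lift _ _)) mul0r. Qed.

Lemma dephase_mxll (u : 'rV[R]_3) i j : unit_vec u ->
  dephase_mx u (lift ord0 i) (lift ord0 j) = u 0 i * u 0 j.
Proof.
by move=> u_unit; rewrite mxE /= !bloch4_lift (u_unit : sqnorm u = 1) subrr mul0r mulr0 addr0.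
Qed.

End Dephasing.

Section PauliExpansion.
Variable R : rcfType.
Local Notation C := R[i].

Definition pauli2 (m n : 'I_4) : 'M[C]_(2 * 2) := pauli4 R m *t pauli4 R n.

Definition of_coef (c : 'M[R]_4) : 'M[C]_(2 * 2) :=
  \sum_m \sum_n (c m n)%:C%C *: pauli2 m n.

Definition coef (rho : 'M[C]_4) : 'M[R]_4 :=
  \matrix_(m, n) complex.Re (\tr (rho *m pauli2 m n)).

Lemma adjmx_pauli2 m n : adjmx (pauli2 m n) = pauli2 m n.
Proof. by rewrite /pauli2 adjmx_tens !adjmx_pauli4. Qed.

Lemma adjmx_of_coef c : adjmx (of_coef c) = of_coef c.
Proof.
rewrite /of_coef adjmx_sum; apply: eq_bigr => m _; rewrite adjmx_sum.
by apply: eq_bigr => n _; rewrite adjmxZ adjmx_pauli2 conjc_real.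
Qed.

Lemma of_coefB c c' : of_coef (c - c') = of_coef c - of_coef c'.
Proof.
rewrite /of_coef -sumrB; apply: eq_bigr => m _; rewrite -sumrB.
by apply: eq_bigr => n _; rewrite !mxE rmorphB scalerBl.
Qed.

Lemma mxtrace_pauli2M m n m' n' :
  \tr (pauli2 m n *m pauli2 m' n') = 4 * ((m == m')%:R * (n == n')%:R).
Proof. by rewrite /pauli2 tensmx_mul mxtrace_tens !mxtrace_pauli4M !natrM; ring. Qed.

Lemma mxtrace_of_coefM c c' :
  \tr (of_coef c *m of_coef c') = (4 * \sum_m \sum_n c m n * c' m n)%:C%C.
Proof.
have -> : \tr (of_coef c *m of_coef c') = \sum_m \sum_n \sum_m' \sum_n'
    (c m n)%:C%C * (c' m' n')%:C%C * \tr (pauli2 m n *m pauli2 m' n').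
  rewrite /of_coef mulmx_suml mxtrace_sum; apply: eq_bigr => m _.
  rewrite mulmx_suml mxtrace_sum; apply: eq_bigr => n _.
  rewrite -scalemxAl mulmx_sumr mxtraceZ mxtrace_sum mulr_sumr; apply: eq_bigr => m' _.
  rewrite mulmx_sumr mxtrace_sum mulr_sumr; apply: eq_bigr => n' _.
  by rewrite -scalemxAr mxtraceZ mulrA.
rewrite rmorphM rmorph_sum mulr_sumr /=; apply: eq_bigr => m _.
rewrite rmorph_sum mulr_sumr; apply: eq_bigr => n _.
under eq_bigr do under eq_bigr do rewrite mxtrace_pauli2M mulrCA mulrA mulrA.
under eq_bigr do rewrite sum_mul_eq.
by rewrite sum_mul_eq !rmorphM rmorph_nat /=; ring.
Qed.

Lemma pauli2_complete q p i j :
  \sum_m \sum_n pauli2 m n q p * pauli2 m n i j = (4 * ((p == i) && (q == j)))%:R.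
Proof.
case: (mxtens_indexP q) => q1 q2; case: (mxtens_indexP p) => p1 p2.
case: (mxtens_indexP i) => i1 i2; case: (mxtens_indexP j) => j1 j2.
have eq_index (u v : 'I_2 * 'I_2) : (mxtens_index u == mxtens_index v) = (u == v).
  exact/inj_eq/(can_inj (@mxtens_indexK 2 2)).
rewrite !eq_index /pauli2.
under eq_bigr do under eq_bigr do rewrite !tensmxE mulrACA.
under eq_bigr do rewrite -mulr_sumr.
rewrite -mulr_suml !pauli4_complete !xpair_eqE -natrM.
by case: (p1 == i1); case: (q1 == j1); case: (p2 == i2); case: (q2 == j2).
Qed.

Lemma pauli_expansion (rho : 'M[C]_4) :
  rho = 4%:R^-1 *: \sum_m \sum_n \tr (rho *m pauli2 m n) *: pauli2 m n.
Proof.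
apply/matrixP => i j; rewrite !mxE !summxE.
have -> : \sum_m (\sum_n \tr (rho *m pauli2 m n) *: pauli2 m n) i j =
    \sum_p \sum_q rho p q * \sum_m \sum_n pauli2 m n q p * pauli2 m n i j.
  under eq_bigr do rewrite summxE.
  under eq_bigr do under eq_bigr do rewrite mxE /mxtrace mulr_suml.
  under eq_bigr do under eq_bigr do under eq_bigr do rewrite mxE mulr_suml.
  under eq_bigr do rewrite exchange_big.
  rewrite exchange_big; apply: eq_bigr => p _.
  under eq_bigr do rewrite exchange_big.
  rewrite exchange_big; apply: eq_bigr => q _.
  rewrite mulr_sumr; apply: eq_bigr => m _; rewrite mulr_sumr; apply: eq_bigr => n _.
  by rewrite mulrA.
under eq_bigr do under eq_bigr do rewrite pauli2_complete natrM mulrCA.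
under eq_bigr do rewrite -mulr_sumr.
rewrite -mulr_sumr mulrA mulVf ?mul1r ?pnatr_eq0 //.
under eq_bigr do under eq_bigr do
  rewrite -mulnb natrM [(_ == j)]eq_sym [(_ == i)]eq_sym mulrA.
by under eq_bigr do rewrite sum_mul_eq; rewrite sum_mul_eq.
Qed.

Lemma of_coef_coef rho : adjmx rho = rho -> rho = 4%:R^-1 *: of_coef (coef rho).
Proof.
move=> rho_herm; rewrite {1}(pauli_expansion rho) /of_coef; congr (_ *: _).
apply: eq_bigr => m _; apply: eq_bigr => n _; rewrite mxE conjc_fixed_real //.
by rewrite -mxtrace_adj adjmxM adjmx_pauli2 rho_herm mxtrace_mulC.
Qed.

Lemma dephase_tens_pauli2 k l m n :
  \sum_(a : bool) \sum_(b : bool)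
     (projk a k *t projk b l) *m pauli2 m n *m (projk a k *t projk b l)
  = dephase k (pauli4 R m) *t dephase l (pauli4 R n).
Proof.
rewrite /dephase tensmx_suml; apply: eq_bigr => a _.
rewrite tensmx_sumr; apply: eq_bigr => b _.
by rewrite /pauli2 !tensmx_mul.
Qed.

Lemma chi_of_coef s c k l :
  chi (s *: of_coef c) k l = s *: of_coef ((dephase_mx k)^T *m c *m dephase_mx l).
Proof.
rewrite /chi.
have -> : \sum_(a : bool) \sum_(b : bool)
    (projk a k *t projk b l) *m (s *: of_coef c) *m (projk a k *t projk b l) =
    s *: \sum_m \sum_n (c m n)%:C%C *:
      (dephase k (pauli4 R m) *t dephase l (pauli4 R n)).
  under eq_bigr do under eq_bigr do rewrite -scalemxAr -scalemxAl /of_coef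
    mulmx_sumr mulmx_suml.
  under eq_bigr do rewrite -scaler_sumr.
  rewrite -scaler_sumr; congr (_ *: _).
  under eq_bigr do rewrite exchange_big.
  rewrite exchange_big; apply: eq_bigr => m _.
  under eq_bigr do under eq_bigr do rewrite mulmx_sumr mulmx_suml.
  under eq_bigr do rewrite exchange_big.
  rewrite exchange_big; apply: eq_bigr => n _.
  rewrite -dephase_tens_pauli2 scaler_sumr; apply: eq_bigr => a _.
  rewrite scaler_sumr; apply: eq_bigr => b _.
  by rewrite -scalemxAr -scalemxAl.
congr (_ *: _); rewrite /of_coef.
under eq_bigr do under eq_bigr do rewrite !dephase_pauli4 tensmx_suml scaler_sumr.
under eq_bigr do rewrite exchange_big.
rewrite exchange_big; apply: eq_bigr => m' _.
under eq_bigr do under eq_bigr do rewrite tensmx_sumr scaler_sumr.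
under eq_bigr do rewrite exchange_big.
rewrite exchange_big; apply: eq_bigr => n' _.
rewrite !mxE rmorph_sum scaler_suml exchange_big; apply: eq_bigr => n _.
rewrite !mxE mulr_suml rmorph_sum scaler_suml; apply: eq_bigr => m _.
rewrite tensmxZl tensmxZr !scalerA !mxE -!rmorphM.
by congr (_%:C%C *: _); ring.
Qed.

Lemma HS2_chi rho k l : adjmx rho = rho ->
  HS2 rho (chi rho k l) = (4%:R^-1 *
    \sum_m \sum_n (coef rho - (dephase_mx k)^T *m coef rho *m dephase_mx l) m n ^+ 2)%:C%C.
Proof.
move=> rho_herm; set c := coef rho.
have inv4 : (4%:R : C)^-1 = ((4%:R : R)^-1)%:C%C by rewrite fmorphV rmorph_nat.
rewrite /HS2 (of_coef_coef rho_herm) -/c chi_of_coef -scalerBr -of_coefB.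
rewrite adjmxZ adjmx_of_coef -scalemxAl -scalemxAr !mxtraceZ.
rewrite mxtrace_of_coefM inv4 conjc_real -!rmorphM; congr (_%:C%C).
set d := c - _.
suff -> : \sum_m \sum_n d m n ^+ 2 = \sum_m \sum_n d m n * d m n by field.
by apply: eq_bigr => m _; apply: eq_bigr => n _; rewrite expr2.
Qed.

End PauliExpansion.

Section DephaseResidual.
Variables (R : rcfType) (c : 'M[R]_4) (k l : 'rV[R]_3).
Hypotheses (k_unit : unit_vec k) (l_unit : unit_vec l).

Let d := c - (dephase_mx k)^T *m c *m dephase_mx l.

Let dE m n : d m n = c m n - \sum_a \sum_b dephase_mx k a m * c a b * dephase_mx l b n.
Proof. by rewrite /d 2!mxE mulmx_trmx_entry. Qed.

Lemma dephase_residual00 : d ord0 ord0 = 0.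
Proof.
rewrite dE big_ord_recl [X in - (_ + X)]big1 => [|i _]; last first.
  by rewrite big1 // => b _; rewrite dephase_mxl0 !mul0r.
rewrite big_ord_recl big1 => [|j _]; last by rewrite dephase_mxl0 mulr0.
by rewrite !addr0 !dephase_mx00 // mul1r mulr1 subrr.
Qed.

Lemma dephase_residuall0 i :
  d (lift ord0 i) ord0 = c (lift ord0 i) ord0 - k 0 i * \sum_a k 0 a * c (lift ord0 a) ord0.
Proof.
rewrite dE big_ord_recl big1 => [|b _]; last by rewrite dephase_mx0l !mul0r.
rewrite add0r mulr_sumr; congr (_ - _); apply: eq_bigr => a _.
rewrite big_ord_recl big1 => [|b _]; last by rewrite dephase_mxl0 mulr0.
by rewrite addr0 dephase_mxll // dephase_mx00 //; ring.
Qed.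

Lemma dephase_residual0l j :
  d ord0 (lift ord0 j) = c ord0 (lift ord0 j) - l 0 j * \sum_b l 0 b * c ord0 (lift ord0 b).
Proof.
rewrite dE big_ord_recl [X in - (_ + X)]big1 => [|a _]; last first.
  by rewrite big1 // => b _; rewrite dephase_mxl0 !mul0r.
rewrite addr0 big_ord_recl dephase_mx0l mulr0 add0r mulr_sumr; congr (_ - _).
by apply: eq_bigr => b _; rewrite dephase_mx00 // dephase_mxll //; ring.
Qed.

Lemma dephase_residualll i j : d (lift ord0 i) (lift ord0 j) = c (lift ord0 i) (lift ord0 j)
  - k 0 i * l 0 j * \sum_a \sum_b k 0 a * l 0 b * c (lift ord0 a) (lift ord0 b).
Proof.
rewrite dE big_ord_recl big1 => [|b _]; last by rewrite dephase_mx0l !mul0r.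
rewrite add0r mulr_sumr; congr (_ - _); apply: eq_bigr => a _.
rewrite big_ord_recl dephase_mx0l mulr0 add0r mulr_sumr; apply: eq_bigr => b _.
by rewrite !dephase_mxll //; ring.
Qed.

Lemma sum_sqr_dephase_residual : \sum_m \sum_n d m n ^+ 2 =
  \sum_i c (lift ord0 i) ord0 ^+ 2 - (\sum_a k 0 a * c (lift ord0 a) ord0) ^+ 2
  + (\sum_j c ord0 (lift ord0 j) ^+ 2 - (\sum_b l 0 b * c ord0 (lift ord0 b)) ^+ 2)
  + (\sum_i \sum_j c (lift ord0 i) (lift ord0 j) ^+ 2
     - (\sum_a \sum_b k 0 a * l 0 b * c (lift ord0 a) (lift ord0 b)) ^+ 2).
Proof.
have x_part : \sum_i d (lift ord0 i) ord0 ^+ 2 =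
    \sum_i c (lift ord0 i) ord0 ^+ 2 - (\sum_a k 0 a * c (lift ord0 a) ord0) ^+ 2.
  by under eq_bigr do rewrite dephase_residuall0; exact: sum_sqr_sub_proj.
have y_part : \sum_j d ord0 (lift ord0 j) ^+ 2 =
    \sum_j c ord0 (lift ord0 j) ^+ 2 - (\sum_b l 0 b * c ord0 (lift ord0 b)) ^+ 2.
  by under eq_bigr do rewrite dephase_residual0l; exact: sum_sqr_sub_proj.
have T_part : \sum_i \sum_j d (lift ord0 i) (lift ord0 j) ^+ 2 =
    \sum_i \sum_j c (lift ord0 i) (lift ord0 j) ^+ 2
    - (\sum_a \sum_b k 0 a * l 0 b * c (lift ord0 a) (lift ord0 b)) ^+ 2.
  under eq_bigr do under eq_bigr do rewrite dephase_residualll.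
  rewrite !pair_bigA /=.
  apply: sum_sqr_sub_proj; rewrite -(pair_bigA _ (fun i j => (k 0 i * l 0 j) ^+ 2)) /=.
  under eq_bigr do under eq_bigr do rewrite exprMn.
  by under eq_bigr do rewrite -mulr_sumr; rewrite -mulr_suml l_unit k_unit mulr1.
rewrite big_ord_recl [X in X + _]big_ord_recl dephase_residual00 expr0n add0r.
rewrite [X in _ + X](eq_bigr _ (fun i _ => big_ord_recl _ _)) big_split /=.
by rewrite x_part y_part T_part; ring.
Qed.

End DephaseResidual.

Section GeometricMeasure.
Variable R : rcfType.

Lemma coef_xvec (rho : 'M[R[i]]_4) i : coef rho (lift ord0 i) ord0 = xvec rho 0 i.
Proof. by rewrite !mxE /pauli2 pauli4_lift pauli4_0. Qed.

Lemma coef_yvec (rho : 'M[R[i]]_4) j : coef rho ord0 (lift ord0 j) = yvec rho 0 j.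
Proof. by rewrite !mxE /pauli2 pauli4_lift pauli4_0. Qed.

Lemma coef_Tmat (rho : 'M[R[i]]_4) i j : coef rho (lift ord0 i) (lift ord0 j) = Tmat rho i j.
Proof. by rewrite !mxE /pauli2 !pauli4_lift. Qed.

Lemma HS2_chi_xvec0 (rho : 'M[R[i]]_4) k l :
  adjmx rho = rho -> xvec rho = 0 -> unit_vec k -> unit_vec l ->
  HS2 rho (chi rho k l) = (4%:R^-1 * (sqnorm (yvec rho) - dotr l (yvec rho) ^+ 2
     + \sum_i \sum_j Tmat rho i j ^+ 2 - dotr k (l *m (Tmat rho)^T) ^+ 2))%:C%C.
Proof.
move=> rho_herm x0 k_unit l_unit.
rewrite HS2_chi // sum_sqr_dephase_residual //; congr (_ * _)%:C%C.
have x_sum : \sum_i coef rho (lift ord0 i) ord0 ^+ 2 = 0.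
  by rewrite big1 // => i _; rewrite coef_xvec x0 mxE expr0n.
have x_dot : \sum_a k 0 a * coef rho (lift ord0 a) ord0 = 0.
  by rewrite big1 // => a _; rewrite coef_xvec x0 mxE mulr0.
have y_sum : \sum_j coef rho ord0 (lift ord0 j) ^+ 2 = sqnorm (yvec rho).
  by apply: eq_bigr => j _; rewrite coef_yvec.
have y_dot : \sum_b l 0 b * coef rho ord0 (lift ord0 b) = dotr l (yvec rho).
  by apply: eq_bigr => b _; rewrite coef_yvec.
have T_sum : \sum_i \sum_j coef rho (lift ord0 i) (lift ord0 j) ^+ 2 =
    \sum_i \sum_j Tmat rho i j ^+ 2.
  by apply: eq_bigr => i _; apply: eq_bigr => j _; rewrite coef_Tmat.
have T_dot : \sum_a \sum_b k 0 a * l 0 b * coef rho (lift ord0 a) (lift ord0 b) =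
    dotr k (l *m (Tmat rho)^T).
  apply: eq_bigr => a _; rewrite !mxE mulr_sumr; apply: eq_bigr => b _.
  by rewrite coef_Tmat !mxE mulrA.
by rewrite x_sum x_dot y_sum y_dot T_sum T_dot; ring.
Qed.

End GeometricMeasure.

Theorem mainTheorem3 (R : rcfType) (rho : 'M[R[i]]_4) :
  density_matrix rho ->
  xvec rho = 0 ->
  exists kappa : R,
    largest_eigenvalue ((Tmat rho)^T *m Tmat rho + (yvec rho)^T *m yvec rho) kappa /\
    is_G rho ((4%:R)^-1 * (\sum_j yvec rho 0 j ^+ 2
                           + \sum_i \sum_j Tmat rho i j ^+ 2 - kappa)).
Proof.
move=> [rho_herm _ _] x0; set T := Tmat rho; set y := yvec rho.
set M := T^T *m T + y^T *m y.
have M_sym : M^T = M by rewrite /M linearD /= !trmx_mul !trmxK.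
have [kappa [[v vM v0] rayleigh]] := symmx_max_eigen M_sym.
exists kappa; split; first exact: rayleigh_largest_eigenvalue vM v0 rayleigh.
split.
  pose l := (Num.sqrt (sqnorm v))^-1 *: v.
  have l_unit : sqnorm l = 1 := sqnorm_normalize v0.
  have lM : l *m M = kappa *: l by rewrite /l -scalemxAl vM !scalerA mulrC.
  have [k k_unit kt] := exists_unit_dotr_sqr (l *m T^T).
  exists k, l; split => //; rewrite HS2_chi_xvec0 //; congr (_ * _)%:C%C.
  have := quad_eigenvector lM; rewrite quad_gram_outer l_unit mulr1 -kt => <-.
  by rewrite -/(sqnorm y); ring.
move=> k l k_unit l_unit; rewrite HS2_chi_xvec0 // lecR ler_wpM2l ?invr_ge0 ?ler0n //.
have := rayleigh l; rewrite quad_gram_outer (l_unit : sqnorm l = 1) mulr1.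
have := cauchy_schwarz3 k (l *m T^T); rewrite (k_unit : sqnorm k = 1) mul1r.
rewrite -/(sqnorm y); lra.
Qed.
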